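(* Let $A$ be a reduced commutative $\mathbb{N}$-graded ring and let $I=A_{\ge d}$ for some positive integer $d$. Then $I$ is an integrally closed ideal of $A$.
   Context: For an $\mathbb{N}$-graded ring $A$ and a positive integer $m$, $A_{\ge m}=\bigoplus_{j\ge m}A_j$. *)

From HB Require Import structures.
From mathcomp Require Import all_boot all_order all_algebra.
Set Implicit Arguments. Unset Strict Implicit. Unset Printing Implicit Defensive.
Import Order.TTheory GRing.Theory.
Local Open Scope ring_scope.

(* An N-grading of a commutative ring A: a family G of additive subgroups
   G j = A_j such that A_i A_j ⊆ A_(i+j) and A = ⊕_j A_j (internal direct sum:
   every element is a finite sum of homogeneous elements, uniquely). *)
Definition is_Ngrading (A : comPzRingType) (G : nat -> A -> Prop) : Prop :=
  [/\ (forall i, G i 0),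
      (forall i x y, G i x -> G i y -> G i (x - y)),
      (forall i j x y, G i x -> G j y -> G (i + j)%N (x * y)),
      (forall x : A, exists (n : nat) (f : nat -> A),
          (forall i, G i (f i)) /\ x = \sum_(i < n) f i) &
      (forall (n : nat) (f : nat -> A), (forall i, G i (f i)) ->
          \sum_(i < n) f i = 0 -> forall i, (i < n)%N -> f i = 0)].

Definition graded_ge (A : comPzRingType) (G : nat -> A -> Prop) (m : nat) (x : A) : Prop :=
  exists (n : nat) (f : nat -> A), (forall i, G i (f i)) /\ x = \sum_(m <= i < n) f i.

Definition reduced (A : comPzRingType) : Prop :=
  forall (x : A) (n : nat), x ^+ n = 0 -> x = 0.

Definition is_ideal (A : comPzRingType) (I : A -> Prop) : Prop :=
  [/\ I 0, (forall x y, I x -> I y -> I (x + y)) & (forall r x, I x -> I (r * x))].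

Definition ideal_pow (A : comPzRingType) (I : A -> Prop) (k : nat) (x : A) : Prop :=
  exists (m : nat) (r : 'I_m -> A) (c : 'I_m -> 'I_k -> A),
    (forall i j, I (c i j)) /\ x = \sum_(i < m) r i * \prod_(j < k) c i j.

Definition integral_over_ideal (A : comPzRingType) (I : A -> Prop) (x : A) : Prop :=
  exists (n : nat) (a : nat -> A),
    [/\ (0 < n)%N,
        (forall k, (1 <= k <= n)%N -> ideal_pow I k (a k)) &
        x ^+ n + \sum_(1 <= k < n.+1) a k * x ^+ (n - k) = 0].

Definition integrally_closed_ideal (A : comPzRingType) (I : A -> Prop) : Prop :=
  is_ideal I /\ forall x, integral_over_ideal I x -> I x.

From mathcomp Require Import all_boot all_order all_algebra.
From mathcomp Require Import zify.
Set Implicit Arguments. Unset Strict Implicit. Unset Printing Implicit Defensive.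
Import GRing.Theory.
Local Open Scope ring_scope.

(* Suppose x is integral over I = A_{>=d}, with a_k in I^k ⊆ A_{>=kd}, and that
   x lies in A_{>=j} for some j < d; write x = y + z with y in A_j and z in
   A_{>=j+1}. With n the degree of the equation, x^n - y^n and every a_k x^(n-k)
   lie in A_{>=jn+1}, so the equation puts the homogeneous element y^n of degree
   jn in A_{>=jn+1}, hence y^n = 0, and y = 0 since A is reduced. Thus
   x is in A_{>=j+1}, and by induction x is in A_{>=d}. *)

Section GradedRing.

Variables (A : comPzRingType) (G : nat -> A -> Prop).
Hypothesis gradedG : is_Ngrading G.

Lemma homog0 i : G i 0.
Proof. by case: gradedG. Qed.

Lemma homogB i x y : G i x -> G i y -> G i (x - y).
Proof. by case: gradedG => _ homogB _ _ _; apply: homogB. Qed.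

Lemma homogN i x : G i x -> G i (- x).
Proof. by move/(homogB (homog0 i)); rewrite sub0r. Qed.

Lemma homogD i x y : G i x -> G i y -> G i (x + y).
Proof. by move=> Gx /homogN Gy; rewrite -[y]opprK; apply: homogB. Qed.

Lemma homogM i j x y : G i x -> G j y -> G (i + j) (x * y).
Proof. by case: gradedG => _ _ homogM _ _; apply: homogM. Qed.

Lemma homogXS j y p : G j y -> G (j * p.+1) (y ^+ p.+1).
Proof.
move=> Gy; elim: p => [|p IHp]; first by rewrite muln1 expr1.
by rewrite exprS mulnS; apply: homogM.
Qed.

Lemma graded_ge_all x : graded_ge G 0 x.
Proof.
case: gradedG => _ _ _ decomp _; have [n [f [Gf ->]]] := decomp x.
by exists n, f; rewrite big_mkord.
Qed.

Lemma graded_ge0 m : graded_ge G m 0.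
Proof. by exists 0%N, (fun=> 0); split; [apply: homog0 | rewrite big_geq]. Qed.

Lemma graded_ge_homog m i y : (m <= i)%N -> G i y -> graded_ge G m y.
Proof.
move=> le_mi Gy; exists i.+1, (fun k => if k == i then y else 0); split.
  by move=> k; case: eqP => [->|_]; [apply: Gy | apply: homog0].
rewrite big_nat_recr //= eqxx big_nat_cond big1 ?add0r // => k.
by case/andP=> /andP[_ /ltn_eqF ->].
Qed.

Lemma graded_ge_widen m x : graded_ge G m x ->
  exists n0, forall n, (n0 <= n)%N ->
    exists f, (forall i, G i (f i)) /\ x = \sum_(m <= i < n) f i.
Proof.
move=> [n0 [f [Gf ->]]]; exists n0 => n le_n0n.
exists (fun i => if (i < n0)%N then f i else 0); split.
  by move=> i; case: ifP => _; [apply: Gf | apply: homog0].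
by rewrite (big_nat_widen _ _ _ _ _ le_n0n) big_mkcond.
Qed.

Lemma graded_geD m x y :
  graded_ge G m x -> graded_ge G m y -> graded_ge G m (x + y).
Proof.
move=> /graded_ge_widen[n1 wx] /graded_ge_widen[n2 wy].
have [f [Gf ->]] := wx _ (leq_maxl n1 n2).
have [g [Gg ->]] := wy _ (leq_maxr n1 n2).
exists (maxn n1 n2), (fun i => f i + g i); split; last by rewrite big_split.
by move=> i; apply: homogD.
Qed.

Lemma graded_geN m x : graded_ge G m x -> graded_ge G m (- x).
Proof.
move=> [n [f [Gf ->]]]; exists n, (fun i => - f i).
by split; [move=> i; apply: homogN | rewrite sumrN].
Qed.

Lemma graded_ge_sum m (I : Type) (r : seq I) (P : pred I) (F : I -> A) :
  (forall i, P i -> graded_ge G m (F i)) ->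
  graded_ge G m (\sum_(i <- r | P i) F i).
Proof. by apply: big_ind; [apply: graded_ge0 | apply: graded_geD]. Qed.

Lemma graded_ge_le m m' x :
  (m <= m')%N -> graded_ge G m' x -> graded_ge G m x.
Proof.
move=> le_mm' [n [f [Gf ->]]]; rewrite big_nat_cond.
apply: graded_ge_sum => i /andP[/andP[le_m'i _] _].
exact: graded_ge_homog (leq_trans le_mm' le_m'i) (Gf i).
Qed.

Lemma graded_geM m m' x y :
  graded_ge G m x -> graded_ge G m' y -> graded_ge G (m + m') (x * y).
Proof.
move=> [n [f [Gf ->]]] [n' [g [Gg ->]]].
rewrite mulr_suml big_nat_cond; apply: graded_ge_sum => i /andP[/andP[le_mi _] _].
rewrite mulr_sumr big_nat_cond; apply: graded_ge_sum => k /andP[/andP[le_m'k _] _].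
exact: graded_ge_homog (leq_add le_mi le_m'k) (homogM (Gf i) (Gg k)).
Qed.

Lemma graded_geMl m r x : graded_ge G m x -> graded_ge G m (r * x).
Proof. by rewrite -[m]add0n; apply: graded_geM (graded_ge_all r). Qed.

Lemma graded_ge_ideal m : is_ideal (graded_ge G m).
Proof.
split; [exact: graded_ge0 | exact: graded_geD | move=> r x; exact: graded_geMl].
Qed.

Lemma graded_ge_prod m k (c : 'I_k -> A) :
  (forall j, graded_ge G m (c j)) -> graded_ge G (k * m) (\prod_(j < k) c j).
Proof.
elim: k c => [|k IHk] c gec; first by rewrite big_ord0; apply: graded_ge_all.
by rewrite big_ord_recr /= mulSn addnC; apply: graded_geM => //; apply: IHk.
Qed.

Lemma graded_geX m p x : graded_ge G m x -> graded_ge G (p * m) (x ^+ p).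
Proof.
move=> gex; elim: p => [|p IHp]; first exact: graded_ge_all.
by rewrite exprS mulSn; apply: graded_geM.
Qed.

Lemma graded_ge_ideal_pow m k v :
  ideal_pow (graded_ge G m) k v -> graded_ge G (k * m) v.
Proof.
move=> [n [r [c [gec ->]]]]; apply: graded_ge_sum => i _.
exact/graded_geMl/graded_ge_prod.
Qed.

Lemma graded_ge_split j x :
  graded_ge G j x -> exists2 y, G j y & graded_ge G j.+1 (x - y).
Proof.
move=> [n [f [Gf ->]]]; have [le_nj|lt_jn] := leqP n j.
  by exists 0; rewrite ?big_geq ?subrr; [apply: homog0 | apply: graded_ge0 |].
exists (f j) => //; rewrite big_ltn // addrAC subrr add0r.
by exists n, f.
Qed.

Lemma homog_graded_ge_eq0 j y : G j y -> graded_ge G j.+1 y -> y = 0.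
Proof.
move=> Gy [n [f [Gf y_def]]].
have [le_nSj|lt_jn] := leqP n j.+1; first by rewrite y_def big_geq.
(* h decomposes y - y = 0 into homogeneous parts; uniqueness forces its
   degree-j part y to vanish. *)
pose h i := if (i <= j)%N then (if i == j then y else 0) else - f i.
have Gh i : G i (h i).
  rewrite /h; case: leqP => _; last exact: homogN.
  by case: eqP => [->|_]; [apply: Gy | apply: homog0].
have sum_h : \sum_(i < n) h i = 0.
  rewrite -(big_mkord xpredT) (big_cat_nat (leq0n j.+1) (ltnW lt_jn)) /=.
  rewrite big_nat_recr //= big_nat_cond big1 ?add0r; last first.
    by move=> i /andP[/andP[_ lt_ij] _]; rewrite /h (ltnW lt_ij) (ltn_eqF lt_ij).
  rewrite {1}/h leqnn eqxx.
  rewrite (eq_big_nat _ _ (F2 := fun i => - f i)) ?sumrN -?y_def ?subrr //.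
  by move=> i /andP[lt_ji _]; rewrite /h leqNgt lt_ji.
case: gradedG => _ _ _ _ /(_ n h Gh sum_h j (ltnW lt_jn)).
by rewrite /h leqnn eqxx.
Qed.

Lemma graded_geXB j p x y : G j y -> graded_ge G j.+1 (x - y) ->
  graded_ge G (j * p.+1).+1 (x ^+ p.+1 - y ^+ p.+1).
Proof.
move=> Gy gexy; have gey := graded_ge_homog (leqnn j) Gy.
have gex : graded_ge G j x.
  by rewrite -(subrK y x); apply: graded_geD (graded_ge_le (leqnSn j) gexy) gey.
rewrite subrXX mulnS -addSn mulnC; apply: graded_geM => //=.
apply: graded_ge_sum => i _.
apply: graded_ge_le (graded_geM (graded_geX _ gex) (graded_geX _ gey)).
by rewrite -mulnDl subnK // -ltnS.
Qed.

Lemma integral_graded_ge_step d j n (a : nat -> A) x :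
  reduced A -> (j < d)%N -> (0 < n)%N -> graded_ge G j x ->
  (forall k, (1 <= k <= n)%N -> graded_ge G (k * d) (a k)) ->
  x ^+ n + \sum_(1 <= k < n.+1) a k * x ^+ (n - k) = 0 ->
  graded_ge G j.+1 x.
Proof.
move=> redA lt_jd; case: n => // p _ gex gea eq_x.
have [y Gy gexy] := graded_ge_split gex.
suff y0 : y = 0 by rewrite -[x]subr0 -y0.
apply: (redA _ p.+1); apply: homog_graded_ge_eq0 (homogXS p Gy) _.
have -> : y ^+ p.+1 =
    - ((x ^+ p.+1 - y ^+ p.+1) + \sum_(1 <= k < p.+2) a k * x ^+ (p.+1 - k)).
  by rewrite addrAC eq_x sub0r opprK.
apply/graded_geN/graded_geD; first exact: graded_geXB.
rewrite big_nat_cond; apply: graded_ge_sum => k /andP[/andP[ge1k lekSp] _].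
apply: graded_ge_le (graded_geM (gea k _) (graded_geX _ gex)); last by rewrite ge1k.
(* k d + j (n - k) = j n + k (d - j) > j n *)
by nia.
Qed.

End GradedRing.

Theorem lemma3p6 (A : comPzRingType) (G : nat -> A -> Prop) (d : nat) :
  is_Ngrading G -> reduced A -> (0 < d)%N ->
  integrally_closed_ideal (graded_ge G d).
Proof.
move=> gradedG redA _; split; first exact: graded_ge_ideal.
move=> x [n [a [n_gt0 a_pow eq_x]]].
have gea k : (1 <= k <= n)%N -> graded_ge G (k * d) (a k).
  by move/a_pow/(graded_ge_ideal_pow gradedG).
suff gex j : (j <= d)%N -> graded_ge G j x by apply: gex.
elim: j => [|j IHj] lt_jd; first exact: graded_ge_all.
exact: integral_graded_ge_step redA lt_jd n_gt0 (IHj (ltnW lt_jd)) gea eq_x.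
Qed.
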